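(* Consider a non-periodic $F$-orbit containing $(0,-1)$ and $(0,1)$, with $(0,1)=F^n(0,-1)$. Let $w=w_0\cdots w_{n-1}$ be the associated positive boundary word encoding the itinerary from $(0,-1)$ to $(0,1)$, and let its rank be $2m-1$. Then: <ol> <li>The reduced word $\underline w=w_1\cdots w_{n-1}$ is a palindrome consisting of $2m-1$ blocks: $$\underline w=a^{i_1}b^{i_2}a^{i_3}\cdots a^{i_m}\cdots a^{i_3}b^{i_2}a^{i_1}$$ (letters alternating, with $i_k\ge1$). Here the middle block is a power of $a$ if $m$ is odd and a power of $b$ if $m$ is even, and $i_m+2\sum_{k=1}^{m-1}i_k=n-1$.</li> <li>$n$ is odd and $i_m$ is even if and only if the boundary segment $(0,-1),F(0,-1),\dots,F^n(0,-1)$ meets $\mathrm{Fix}(R)$ exactly once. The intersection lies in $\mathrm{dom}(\mathrm M_a)$ (resp. $\mathrm{dom}(\mathrm M_b)$), in which case $m$ is odd (resp. even).</li> <li>$n$ is even and $i_m$ is odd if and only if the boundary segment meets $\mathrm{Fix}(F\circ R)$ exactly once. The intersection lies in $\mathrm{dom}(\mathrm M_a)$ if either $i_m=1$ and $m$ is even, or $i_m>1$ and $m$ is odd; it lies in $\mathrm{dom}(\mathrm M_b)$ if either $i_m=1$ and $m$ is odd, or $i_m>1$ and $m$ is even.</li> </ol>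
   Context: For real parameters $\mathrm a,\mathrm b$, the map $F:\mathbb R^2\to\mathbb R^2$ is $F(x,y)=(\mathrm a x-y,x)$ if $x>0$ or ($x=0$ and $y\le0$), and $F(x,y)=(\mathrm b x-y,x)$ otherwise. $\mathrm{dom}(\mathrm M_a)$ is the open right half-plane together with the negative $y$-axis, and $\mathrm{dom}(\mathrm M_b)$ is its complement. $R(x,y)=(y,x)$, so $F^{-1}=RFR$. $\mathrm{Fix}(R)=\{(x,x):x\in\mathbb R\}$ and $\mathrm{Fix}(F\circ R)=\{(\tfrac{\mathrm a}{2}y,y):y>0\}\cup\{(\tfrac{\mathrm b}2y,y):y\le0\}$. Boundary segment and word: for an orbit segment $z_0=(0,-1),z_1,\dots,z_n$ of $F$ with $z_n=(0,1)$, the word is $w=w_0\cdots w_{n-1}$ with $w_t=a$ if $z_t\in\mathrm{dom}(\mathrm M_a)$ and $b$ otherwise; it is positive because $w_0=a$. The rank of $w$ is $1+|w|_{ab}+|w|_{ba}$, where $|w|_u$ counts occurrences of the factor $u$; it equals the number of half-turns around the origin. *)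

From HB Require Import structures.
From mathcomp Require Import all_boot all_order all_algebra.
From mathcomp Require Import reals.
Set Implicit Arguments. Unset Strict Implicit. Unset Printing Implicit Defensive.
Import Order.TTheory GRing.Theory Num.Theory.
Local Open Scope ring_scope.

Inductive letter := La | Lb.

Definition letter_eqb (x y : letter) : bool :=
  match x, y with La, La | Lb, Lb => true | _, _ => false end.
Lemma letter_eqP : Equality.axiom letter_eqb.
Proof. by case; case; constructor. Qed.
HB.instance Definition _ := hasDecEq.Build letter letter_eqP.

Section Dynamics.
Variable R : realType.
Implicit Types (a b : R) (p : R * R).

(* dom(M_a): open right half-plane together with the (closed) negative y-axis
   {x = 0, y <= 0}; dom(M_b) is its complement. *)
Definition inDomA p : bool := (0 < p.1) || ((p.1 == 0) && (p.2 <= 0)).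

Definition F a b p : R * R :=
  if inDomA p then (a * p.1 - p.2, p.1) else (b * p.1 - p.2, p.1).

Definition Rrefl p : R * R := (p.2, p.1).

Definition inFixR p : bool := Rrefl p == p.
Definition inFixFR a b p : bool := F a b (Rrefl p) == p.

Definition z a b (t : nat) : R * R := iter t (F a b) (0, -1).

Definition letter_of p : letter := if inDomA p then La else Lb.

Definition bword a b (n : nat) : seq letter :=
  [seq letter_of (z a b t) | t <- iota 0 n].

End Dynamics.

Definition count_factor (u v : letter) (w : seq letter) : nat :=
  count (fun q : letter * letter => (q.1 == u) && (q.2 == v)) (zip w (behead w)).

Definition rank (w : seq letter) : nat :=
  (1 + count_factor La Lb w + count_factor Lb La w)%N.

Definition block_letter (k : nat) : letter := if odd k then Lb else La.

Definition alt_blocks (s : seq nat) : seq letter :=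
  flatten [seq nseq (nth 0%N s k) (block_letter k) | k <- iota 0 (size s)].

From HB Require Import structures.
From mathcomp Require Import all_boot all_order all_algebra.
From mathcomp Require Import reals zify ring lra.
Import Order.TTheory GRing.Theory Num.Theory.

(* F is injective, commutes with dilations of positive ratio (both
   domains are cones) and is reversible: F o R o F = R.  As z_{n+1} = (-1,0) =
   R z_0, reversibility yields the symmetry z_{n+1-t} = R z_t of the boundary
   segment.  Non-periodicity makes t |-> z_t injective; with the dilation
   invariance this keeps the intermediate points z_1, ..., z_{n-1} off the
   y-axis, where R preserves the letter.  Hence the reduced word
   w_1 ... w_{n-1} is a palindrome, z_t is in Fix(R) iff 2t = n+1, and z_t is
   in Fix(F o R) iff 2t = n+2.

   A word starting with a is a^{e_0} b^{e_1} a^{e_2} ... for a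
   unique sequence of positive exponents, with 1 + (number of letter changes)
   = rank entries.  Reversal reverses the exponents, so those of the reduced
   word form a palindrome of length 2m-1, determined by its first m entries.

   The theorem follows by locating the symmetric time t in this block
   structure: for Fix(R) it is in the middle block; for Fix(F o R) it is in the
   middle block if that block is longer than 1, and just after it otherwise. *)

Definition flip (x : letter) : letter := if x is La then Lb else La.

Definition flipn (j : nat) (x : letter) : letter := if odd j then flip x else x.

Lemma flipK : involutive flip. Proof. by case. Qed.

Lemma flip_neq {x y} : x != y -> flip x = y. Proof. by case: x; case: y. Qed.

Lemma flipnS j x : flipn j.+1 x = flipn j (flip x).
Proof. by rewrite /flipn /=; case: (odd j); rewrite ?flipK. Qed.

Lemma flipnSr j x : flipn j.+1 x = flip (flipn j x).
Proof. by rewrite /flipn /=; case: (odd j); rewrite ?flipK. Qed.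

Lemma flipnK j : involutive (flipn j).
Proof. by move=> x; rewrite /flipn; case: (odd j); rewrite ?flipK. Qed.

Fixpoint blocks (x : letter) (e : seq nat) : seq letter :=
  if e is k :: e' then nseq k x ++ blocks (flip x) e' else [::].

Lemma alt_blocksE e : alt_blocks e = blocks La e.
Proof.
suff shifted d : flatten [seq nseq (nth 0%N e k) (block_letter (k + d))
                         | k <- iota 0 (size e)] = blocks (flipn d La) e.
  by rewrite -(shifted 0%N); congr flatten; apply: eq_map => k; rewrite addn0.
elim: e d => [|k e IH] d //=; congr (_ ++ _).
rewrite -(addn0 1%N) iotaDl -map_comp -flipnSr -IH.
by congr flatten; apply: eq_map => j /=; rewrite addnS.
Qed.

Lemma size_blocks x e : size (blocks x e) = sumn e.
Proof. by elim: e x => [|k e IH] x //=; rewrite size_cat size_nseq IH. Qed.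

Lemma blocks_rcons x e k :
  blocks x (rcons e k) = blocks x e ++ nseq k (flipn (size e) x).
Proof.
elim: e x => [|k' e IH] x /=; first by rewrite cats0.
by rewrite IH catA flipnS.
Qed.

Lemma rev_blocks x e : rev (blocks x e) = blocks (flipn (size e).+1 x) (rev e).
Proof.
elim: e x => [|k e IH] x //=.
rewrite rev_cat IH rev_cons blocks_rcons size_rev rev_nseq.
have -> : flipn (size e).+2 x = flipn (size e) x by rewrite /flipn /= negbK.
by rewrite flipnK flipnS flipK.
Qed.

Lemma nth_blocks x e j p : (j < size e)%N ->
  (sumn (take j e) <= p < sumn (take j.+1 e))%N -> nth La (blocks x e) p = flipn j x.
Proof.
elim: e x j p => [|k e IH] x [|j] p //= Hj Hp; rewrite nth_cat size_nseq.
  by rewrite take0 addn0 in Hp; rewrite Hp nth_nseq Hp.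
have -> : (p < k)%N = false by lia.
by rewrite flipnS; apply: IH; lia.
Qed.

Fixpoint lead_run (x : letter) (u : seq letter) : nat :=
  if u is y :: u' then (if y == x then (lead_run x u').+1 else 0%N) else 0%N.

Lemma lead_run_blocks x k e : all (fun k => 0 < k)%N e ->
  lead_run x (nseq k x ++ blocks (flip x) e) = k.
Proof.
move=> He; elim: k => [|k IH] /=; last by rewrite eqxx IH.
by case: e He => [|[|k'] e] //= _; case: x.
Qed.

Lemma blocks_inj x e e' : all (fun k => 0 < k)%N e -> all (fun k => 0 < k)%N e' ->
  blocks x e = blocks x e' -> e = e'.
Proof.
elim: e x e' => [|k e IH] x [|k' e'] //=; [by case: k' | by case: k |].
move=> /andP [_ He] /andP [_ He'] E.
have Ek : k = k' by have := congr1 (lead_run x) E; rewrite !lead_run_blocks.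
subst k'; congr (_ :: _); apply: (IH (flip x)) => //.
by elim: k E => //= k IHk [] /IHk.
Qed.

Fixpoint changes (x : letter) (u : seq letter) : nat :=
  if u is y :: u' then ((x != y) + changes y u')%N else 0%N.

Lemma rank_cons x u : rank (x :: u) = (changes x u).+1.
Proof.
rewrite /rank -addnA add1n; congr _.+1; rewrite /count_factor /=.
by elim: u x => [|y u IH] x //=; rewrite -IH; case: x; case: y => /=; lia.
Qed.

Lemma blocks_exist x u : exists e, [/\ all (fun k => 0 < k)%N e,
  blocks x e = x :: u & size e = (changes x u).+1].
Proof.
elim: u x => [|y u IH] x; first by exists [:: 1%N].
have [e [He E Se]] := IH y.
have [Exy|Nxy] := eqVneq x y.
  subst y; case: e He E Se => [|k e] //= /andP [Hk He] E Se.
  by exists (k.+1 :: e); rewrite /= E eqxx add0n.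
exists (1%N :: e); rewrite /= Nxy Se; split=> //.
by rewrite (flip_neq Nxy) E.
Qed.

Lemma palindrome_halves {T : Type} {s : seq T} {m} : rev s = s ->
  (size s).+1 = (2 * m)%N -> drop m s = rev (take m.-1 s).
Proof.
move=> Hpal Hsz.
have Hdrop : size (rev (drop m s)) = m.-1 by rewrite size_rev size_drop; lia.
suff -> : take m.-1 s = rev (drop m s) by rewrite revK.
by rewrite -{1}Hpal -{1}(cat_take_drop m s) rev_cat take_size_cat.
Qed.

Lemma sumn_take_pos (s : seq nat) j : all (fun k => 0 < k)%N s ->
  (j <= size s)%N -> (j <= sumn (take j s))%N.
Proof.
elim: s j => [|k s IH] [|j] //= /andP [Hk Hs] Hj.
by have := IH j Hs Hj; lia.
Qed.

Lemma count_double K N :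
  count (fun t => t + t == K)%N (iota 0 N) = (~~ odd K && (K < N + N))%N.
Proof.
elim: N => [|N IH]; first by rewrite /= andbF.
rewrite -addn1 iotaD count_cat IH /= addn0 add0n.
have [<-|NE] := eqVneq (N + N)%N K; first by rewrite addnn odd_double /=; lia.
case Ho: (odd K) => //=; rewrite addn0; congr nat_of_bool.
have NE1 : K != (N + N).+1 by apply: contraFneq Ho => ->; rewrite /= addnn odd_double.
by apply/idP/idP => H; move: NE NE1 => /eqP NE /eqP NE1; lia.
Qed.

Local Open Scope ring_scope.

Section Dynamics.
Context {R : realType} {a b : R}.
Implicit Types (p q : R * R) (c : R).

Lemma pairE p q : p.1 = q.1 -> p.2 = q.2 -> p = q.
Proof. by case: p; case: q => ? ? ? ? /= -> ->. Qed.

Lemma F_fst p : (F a b p).1 = (if inDomA p then a else b) * p.1 - p.2.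
Proof. by rewrite /F; case: ifP. Qed.

Lemma F_snd p : (F a b p).2 = p.1.
Proof. by rewrite /F; case: ifP. Qed.

Lemma inDomA_off_axis {p} : p.1 != 0 -> inDomA p = (0 < p.1).
Proof. by rewrite /inDomA => /negbTE ->; rewrite andFb orbF. Qed.

Lemma inDomA_flipn p j : letter_of p = flipn j La -> inDomA p = ~~ odd j.
Proof. by rewrite /letter_of /flipn; case: (inDomA p); case: (odd j). Qed.

Lemma F_inj : injective (F a b).
Proof.
move=> p q E.
have E1 : p.1 = q.1 by rewrite -F_snd E F_snd.
have := congr1 fst E; rewrite !F_fst -E1.
have [->|Nz] := eqVneq p.1 0.
  by rewrite !mulr0 !sub0r => /oppr_inj; apply: pairE.
rewrite (inDomA_off_axis Nz) (@inDomA_off_axis q) -?E1 //.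
by move=> /addrI /oppr_inj; apply: pairE.
Qed.

Lemma iter_F_inj k : injective (iter k (F a b)).
Proof. by elim: k => [|k IH] p q //= /F_inj /IH. Qed.

Lemma RreflK : involutive (@Rrefl R). Proof. by case. Qed.

Lemma F_reversible p : F a b (Rrefl (F a b p)) = Rrefl p.
Proof.
set s := if inDomA p then a else b.
have -> : Rrefl (F a b p) = (p.1, s * p.1 - p.2) by apply: pairE; rewrite /= ?F_snd ?F_fst.
apply: pairE; rewrite ?F_snd // F_fst /=.
have [->|Nz] := eqVneq p.1 0; first by rewrite !mulr0 !sub0r opprK.
by rewrite (@inDomA_off_axis (p.1, _)) // /s (inDomA_off_axis Nz) opprB addrC subrK.
Qed.

(* F commutes with dilations of positive ratio, since both domains are cones. *)
Definition dilate c p : R * R := (c * p.1, c * p.2).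

Lemma inDomA_dilate c p : 0 < c -> inDomA (dilate c p) = inDomA p.
Proof.
move=> c0; rewrite /inDomA /dilate /= pmulr_rgt0 // mulf_eq0 (gt_eqF c0) /=.
by rewrite pmulr_rle0.
Qed.

Lemma iter_F_dilate c p k : 0 < c ->
  iter k (F a b) (dilate c p) = dilate c (iter k (F a b) p).
Proof.
move=> c0; elim: k => //= k ->; set q := iter k _ p.
apply: pairE; rewrite /dilate /= ?F_snd // !F_fst /= inDomA_dilate //.
by case: (inDomA q); ring.
Qed.

Lemma zS t : z a b t.+1 = F a b (z a b t). Proof. by []. Qed.

Lemma zD s k : z a b (k + s) = iter k (F a b) (z a b s).
Proof. by rewrite /z iterD. Qed.

Lemma z_one : z a b 1 = (1, 0).
Proof. by rewrite /z /= /F /inDomA /= ltxx eqxx /= oppr_le0 ler01 /= mulr0 sub0r opprK. Qed.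

Lemma reduced_wordE n :
  behead (bword a b n) = [seq letter_of (z a b t) | t <- iota 1 n.-1].
Proof. by case: n. Qed.

Section Orbit.
Context {n : nat}.
Hypothesis Hper : forall k : nat, (0 < k)%N -> z a b k != (0, -1).
Hypothesis Hn : z a b n = (0, 1).

Lemma z_inj i j : z a b i = z a b j -> i = j.
Proof.
wlog Hij : i j / (i <= j)%N.
  by move=> W E; case/orP: (leq_total i j) => H; [| symmetry]; apply: W.
move=> E; apply/eqP; rewrite eqn_leq Hij /= leqNgt; apply/negP => Hlt.
have E0 : z a b (j - i) = z a b 0.
  by apply: (@iter_F_inj i); rewrite -!zD addn0 (subnKC Hij) E.
by case/negP: (Hper (j - i) ltac:(lia)); rewrite E0.
Qed.

(* z_0 = (0,-1) and z_1 = (1,0) both differ from (0,1). *)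
Lemma n_ge2 : (2 <= n)%N.
Proof.
case: n Hn => [|[|n']] //; first by case; lra.
by rewrite z_one; case; lra.
Qed.

Lemma z_after_n : z a b n.+1 = (-1, 0).
Proof. by rewrite zS Hn /F /inDomA /= ltxx eqxx /= ler10 /= mulr0 sub0r. Qed.

(* Reversibility turns the boundary segment into an R-symmetric one, since
   z_{n+1} = R z_0. *)
Lemma z_symmetric t : (t <= n.+1)%N -> z a b (n.+1 - t) = Rrefl (z a b t).
Proof.
elim: t => [_|t IH Ht]; first by rewrite subn0 z_after_n.
have E : (n.+1 - t = (n.+1 - t.+1).+1)%N by lia.
rewrite zS -[z a b t]RreflK -IH; last lia.
by rewrite E zS F_reversible RreflK.
Qed.

(* No intermediate point lies on the negative y-axis: z_s = c z_0 with c > 0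
   would force z_n = c z_{n-s} = c (0, c), hence c = 1 and z_s = z_0. *)
Lemma not_below_axis s : (0 < s <= n)%N -> (z a b s).1 = 0 -> 0 <= (z a b s).2.
Proof.
move=> Hs H1; rewrite leNgt; apply/negP => H2.
set c := - (z a b s).2; have c0 : 0 < c by rewrite oppr_gt0.
have Es : z a b s = dilate c (0, -1).
  by apply: pairE; rewrite /dilate /= ?mulr0 ?H1 // mulrN1 opprK.
have Ens : z a b (n - s) = (0, c).
  rewrite (_ : (n - s = n.+1 - s.+1)%N); last lia.
  rewrite z_symmetric; last lia.
  rewrite zS Es /F /inDomA /dilate /= !mulr0 eqxx /= mulrN1 oppr_le0 (ltW c0) /=.
  by rewrite orbT /Rrefl /= sub0r opprK.
have : z a b n = dilate c (z a b (n - s)).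
  by rewrite -{1}(@subnK s n) ?zD ?Es ?iter_F_dilate //; lia.
rewrite Hn Ens /dilate /= mulr0 => -[Ec].
have c1 : c = 1 by nra.
have : z a b s = z a b 0 by rewrite Es c1 /dilate /= !mul1r.
by move/z_inj; lia.
Qed.

(* Hence no intermediate point lies on the y-axis at all: the positive half is
   the mirror image of the negative one, and the origin is a fixed point. *)
Lemma off_axis {s} : (0 < s < n)%N -> (z a b s).1 != 0.
Proof.
move=> Hs; apply/negP => /eqP H1.
have [H2|H2|H2] := ltgtP (z a b s).2 0.
- by move: (not_below_axis s ltac:(lia) H1); rewrite leNgt H2.
- have Ens : z a b (n - s) = (0, - (z a b s).2).
    rewrite (_ : (n - s = n.+1 - s.+1)%N); last lia.
    rewrite z_symmetric; last lia.
    by rewrite zS /F /inDomA H1 ltxx eqxx /= leNgt H2 /= mulr0 sub0r.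
  have := not_below_axis (n - s) ltac:(lia).
  by rewrite Ens /= oppr_ge0 leNgt H2 => /(_ erefl).
- have : z a b s.+1 = z a b s.
    by rewrite zS; apply: pairE; rewrite ?F_fst ?F_snd H1 H2 ?mulr0 ?subr0.
  by move/z_inj; lia.
Qed.

Lemma letter_symmetric s : (0 < s < n)%N ->
  letter_of (z a b (n - s)) = letter_of (z a b s).
Proof.
move=> Hs; rewrite (_ : (n - s = n.+1 - s.+1)%N); last lia.
rewrite z_symmetric; last lia.
have Nz := off_axis Hs.
by rewrite /letter_of zS (inDomA_off_axis Nz) inDomA_off_axis /Rrefl /= F_snd.
Qed.

Lemma fixR_iff t : (t <= n)%N -> inFixR (z a b t) = (t + t == n.+1)%N.
Proof.
move=> Ht; rewrite /inFixR -z_symmetric; last lia.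
by apply/eqP/eqP => [/z_inj|E]; [lia | congr z; lia].
Qed.

Lemma fixFR_iff t : (t <= n)%N -> inFixFR a b (z a b t) = (t + t == n.+2)%N.
Proof.
move=> Ht; rewrite /inFixFR -z_symmetric -?zS; last lia.
by apply/eqP/eqP => [/z_inj|E]; [lia | congr z; lia].
Qed.

Lemma count_fixR : count (fun t => inFixR (z a b t)) (iota 0 n.+1) = odd n.
Proof.
rewrite (@eq_in_count _ _ (fun t => t + t == n.+1)%N) => [|t].
  by rewrite count_double oddS negbK (_ : (n.+1 < n.+1 + n.+1)%N) ?andbT //; lia.
by rewrite mem_iota => Ht; apply: fixR_iff; lia.
Qed.

Lemma count_fixFR : count (fun t => inFixFR a b (z a b t)) (iota 0 n.+1) = ~~ odd n.
Proof.
rewrite (@eq_in_count _ _ (fun t => t + t == n.+2)%N) => [|t].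
  by rewrite count_double !oddS !negbK (_ : (n.+2 < n.+1 + n.+1)%N) ?andbT //;
    have := n_ge2; lia.
by rewrite mem_iota => Ht; apply: fixFR_iff; lia.
Qed.

Local Notation uw := (behead (bword a b n)).

Lemma reduced_word_size : size uw = n.-1.
Proof. by rewrite reduced_wordE size_map size_iota. Qed.

Lemma reduced_word_nth j : (j < n.-1)%N -> nth La uw j = letter_of (z a b j.+1).
Proof. by move=> Hj; rewrite reduced_wordE (nth_map 0%N) ?size_iota ?nth_iota. Qed.

(* Both w_0 and w_1 are a, as z_0 = (0,-1) and z_1 = (1,0). *)
Lemma bword_cons : bword a b n = La :: La :: behead uw.
Proof.
have [n' ->] : exists n', n = n'.+2 by exists n.-2; have := n_ge2; lia.
pose tail := [seq letter_of (z a b t) | t <- iota 2 n'].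
change (letter_of (z a b 0) :: letter_of (z a b 1) :: tail = La :: La :: tail).
by rewrite z_one /letter_of /z /inDomA /= ltxx eqxx oppr_le0 ler01 ltr01.
Qed.

Lemma reduced_word_palindrome : rev uw = uw.
Proof.
apply: (@eq_from_nth _ La); rewrite size_rev // reduced_word_size => j Hj.
rewrite nth_rev reduced_word_size // !reduced_word_nth; try lia.
rewrite (_ : (n.-1 - j.+1).+1 = n - j.+1)%N; last lia.
by apply: letter_symmetric; have := n_ge2; lia.
Qed.

Lemma reduced_word_blocks {m} : (rank (bword a b n)).+1 = (2 * m)%N ->
  exists e, [/\ all (fun k => 0 < k)%N e, uw = blocks La e, rev e = e
              & (size e).+1 = (2 * m)%N].
Proof.
move=> Hrank; have [e [He Ee Se]] := blocks_exist La (behead uw).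
have Euw : uw = blocks La e by rewrite Ee {1}bword_cons.
have Hsz : (size e).+1 = (2 * m)%N by rewrite Se -Hrank bword_cons rank_cons.
exists e; split=> //; apply: (blocks_inj La); rewrite ?all_rev //.
have Hfl : flipn (size e).+1 La = La by rewrite /flipn Hsz oddM.
by rewrite -{1}Hfl -rev_blocks -Euw reduced_word_palindrome.
Qed.

Section Blocks.
Context {m : nat} {e : seq nat}.
Hypothesis He_pos : all (fun k => 0 < k)%N e.
Hypothesis He_word : uw = blocks La e.
Hypothesis He_pal : rev e = e.
Hypothesis He_size : (size e).+1 = (2 * m)%N.

Local Notation S := (sumn (take m.-1 e)).
Local Notation im := (nth 0%N e m.-1).

Lemma m_pos : (0 < m)%N. Proof. lia. Qed.

Lemma im_pos : (0 < im)%N.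
Proof. by apply: (all_nthP 0%N He_pos); lia. Qed.

Lemma take_middle : take m e = rcons (take m.-1 e) im.
Proof. by rewrite -(take_nth 0%N) ?(prednK m_pos) //; lia. Qed.

Lemma length_identity : (im + 2 * S)%N = n.-1.
Proof.
rewrite -reduced_word_size He_word size_blocks.
rewrite -[sumn e](congr1 sumn (cat_take_drop m e)) sumn_cat.
by rewrite (palindrome_halves He_pal He_size) sumn_rev take_middle sumn_rcons; lia.
Qed.

Lemma odd_n : odd n = ~~ odd im.
Proof.
by rewrite -(prednK (ltnW n_ge2)) /= -length_identity oddD oddM /= addbF.
Qed.

Lemma inDomA_in_block t j : (0 < t < n)%N -> (j < size e)%N ->
  (sumn (take j e) <= t.-1 < sumn (take j.+1 e))%N -> inDomA (z a b t) = ~~ odd j.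
Proof.
move=> Ht Hj Hp; apply: inDomA_flipn.
rewrite [t](_ : t = t.-1.+1); last lia.
by rewrite -reduced_word_nth ?He_word ?(nth_blocks La e j _ Hj Hp) //; lia.
Qed.

Lemma inDomA_middle t : (0 < t < n)%N -> (S <= t.-1 < S + im)%N ->
  inDomA (z a b t) = odd m.
Proof.
move=> Ht Hp.
have Hs : (sumn (take m.-1 e) <= t.-1 < sumn (take m.-1.+1 e))%N.
  by rewrite (prednK m_pos) take_middle sumn_rcons.
rewrite (inDomA_in_block t m.-1 Ht _ Hs); last lia.
by case: m m_pos Hs => //= m' _; rewrite negbK.
Qed.

(* Part 2: the crossing with Fix(R) happens in the middle block. *)
Lemma fixR_domain t : (t <= n)%N -> inFixR (z a b t) -> inDomA (z a b t) = odd m.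
Proof.
move=> Ht; rewrite fixR_iff // => /eqP Htt.
have Hl := length_identity; have Hi := im_pos; have n2 := n_ge2.
by apply: inDomA_middle; lia.
Qed.

(* Part 3: the crossing with Fix(F o R) happens in the middle block if it is
   longer than 1; otherwise just after it, i.e. in block m (or at z_n if m = 1). *)
Lemma fixFR_domain t : (t <= n)%N -> inFixFR a b (z a b t) ->
  inDomA (z a b t) = odd m (+) (im == 1%N).
Proof.
move=> Ht; rewrite fixFR_iff // => /eqP Htt.
have Hl := length_identity; have Hi := im_pos; have n2 := n_ge2.
have [Hgt|Hle] := ltnP 1 im.
  by rewrite (gtn_eqF Hgt) addbF; apply: inDomA_middle; lia.
have Him : im = 1%N by lia.
rewrite Him eqxx addbT.
have [Hm1|Hm1] := eqVneq m 1%N.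
  have Htn : t = n by move: Hl; rewrite Him Hm1 take0 /=; lia.
  by rewrite Htn Hn Hm1 /inDomA /= ltxx eqxx /= ler10.
have HS : (m.-1 <= S)%N by apply: sumn_take_pos; lia.
have Hnext : (0 < nth 0%N e m)%N by apply: (all_nthP 0%N He_pos); lia.
have Hs : (sumn (take m e) <= t.-1 < sumn (take m.+1 e))%N.
  by rewrite (take_nth 0%N) ?take_middle ?sumn_rcons; lia.
by rewrite (@inDomA_in_block t m) //; lia.
Qed.

End Blocks.

End Orbit.
End Dynamics.

Theorem mainTheorem4 (R : realType) (a b : R) (n m : nat) :
  (* the F-orbit of (0,-1) is not periodic *)
  (forall k : nat, (0 < k)%N -> z a b k != (0, -1)) ->
  (* (0,1) = F^n(0,-1) *)
  z a b n = (0, 1) ->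
  (* rank of the boundary word is 2m-1 *)
  (rank (bword a b n)).+1 = (2 * m)%N ->
  exists i : seq nat,
    let im := nth 0%N i m.-1 in
    let uw := behead (bword a b n) in
    let nFixR := count (fun t => inFixR (z a b t)) (iota 0 n.+1) in
    let nFixFR := count (fun t => inFixFR a b (z a b t)) (iota 0 n.+1) in
    [/\
     (* Part 1 *)
     [/\ size i = m, all (fun k => 0 < k)%N i,
         rev uw = uw /\ uw = alt_blocks (i ++ rev (take m.-1 i)),
         block_letter m.-1 = (if odd m then La else Lb)
       & (im + 2 * sumn (take m.-1 i))%N = n.-1],
     (* Part 2 *)
     ((odd n && ~~ odd im) = (nFixR == 1%N)) /\
     (forall t : nat, (t <= n)%N -> nFixR = 1%N -> inFixR (z a b t) ->
        (inDomA (z a b t) -> odd m) /\ (~~ inDomA (z a b t) -> ~~ odd m))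
   & (* Part 3 *)
     ((~~ odd n && odd im) = (nFixFR == 1%N)) /\
     (forall t : nat, (t <= n)%N -> nFixFR = 1%N -> inFixFR a b (z a b t) ->
        ((((im == 1%N) && ~~ odd m) || ((1 < im)%N && odd m)) -> inDomA (z a b t)) /\
        ((((im == 1%N) && odd m) || ((1 < im)%N && ~~ odd m)) -> ~~ inDomA (z a b t)))].
Proof.
move=> Hper Hn Hrank.
have [e [He_pos He_word He_pal He_size]] := reduced_word_blocks Hper Hn Hrank.
have Hm := m_pos He_pos He_size.
(* the exponents are those of the first m blocks *)
exists (take m e); cbv zeta.
rewrite nth_take ?take_takel; try lia.
rewrite (count_fixR Hper Hn) (count_fixFR Hper Hn) (odd_n Hn He_pos He_word He_pal He_size).
have Him := im_pos He_pos He_size.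
split.
- split.
  + by rewrite size_takel; lia.
  + by move: He_pos; rewrite -{1}(cat_take_drop m e) all_cat => /andP [].
  + split; first exact: reduced_word_palindrome.
    by rewrite He_word alt_blocksE -(palindrome_halves He_pal He_size) cat_take_drop.
  + by rewrite /block_letter -{2}(prednK Hm) /=; case: (odd m.-1).
  + exact: length_identity He_pos He_word He_pal He_size.
- split=> [|t Ht _ HR]; first by case: (odd _).
  by rewrite (fixR_domain Hper Hn He_pos He_word He_pal He_size t Ht HR).
- split=> [|t Ht _ HFR]; first by case: (odd _).
  rewrite (fixFR_domain Hper Hn He_pos He_word He_pal He_size t Ht HFR).
  have [->|Hne] := eqVneq (nth 0%N e m.-1) 1%N; first by case: (odd m).
  by rewrite (_ : (1 < nth 0%N e m.-1)%N) //; [case: (odd m) | lia].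
Qed.
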